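(* Let $\beta=(\pi_\ell)_{\ell=1}^L$ be a chainable architecture of depth $L\ge 2$. Then $\mathcal{B}^\beta\subseteq\mathcal{B}^{\beta_s}$ for every $s\in\{1,\dots,L-1\}$. Consequently, for every complex matrix $\mathbf{A}$ of appropriate size, $$E^\beta(\mathbf{A})\ge\max_{1\le s\le L-1}E^{\beta_s}(\mathbf{A}).$$
   Context: A pattern is a tuple $\pi=(a,b,c,d)$ of positive integers; $\mathbf{S}_\pi:=\mathbf{I}_a\otimes\mathbf{1}_{b\times c}\otimes\mathbf{I}_d\in\{0,1\}^{abd\times acd}$. A $\pi$-factor is a complex $abd\times acd$ matrix with support in that of $\mathbf{S}_\pi$; $\Sigma^\pi$ is the set of $\pi$-factors. Patterns $\pi=(a,b,c,d),\pi'=(a',b',c',d')$ are chainable if $ac/a'=b'd'/d$ is an integer, $a\mid a'$, $d'\mid d$; then $\pi*\pi':=(a,bd/d',a'c'/a,d')$. An architecture $\beta=(\pi_\ell)_{\ell=1}^L$ is a sequence of patterns with $a_\ell c_\ell d_\ell=a_{\ell+1}b_{\ell+1}d_{\ell+1}$, chainable if consecutive pairs are chainable; $\pi_p*\cdots*\pi_q$ is the iterated product. For an architecture $\alpha=(\pi'_\ell)_{\ell=1}^K$, $\mathcal{B}^\alpha:=\{\mathbf{X}_1\cdots\mathbf{X}_K:\mathbf{X}_\ell\in\Sigma^{\pi'_\ell}\}$ and $E^\alpha(\mathbf{A}):=\inf_{\mathbf{B}\in\mathcal{B}^\alpha}\|\mathbf{A}-\mathbf{B}\|_F$. For $s\in\{1,\dots,L-1\}$,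 $\beta_s:=(\pi_1*\cdots*\pi_s,\ \pi_{s+1}*\cdots*\pi_L)$. *)

From HB Require Import structures.
From mathcomp Require Import all_boot all_order all_algebra.
From mathcomp Require Import all_classical all_reals.
From mathcomp Require Import complex mxtens.
Set Implicit Arguments. Unset Strict Implicit. Unset Printing Implicit Defensive.
Import Order.TTheory GRing.Theory Num.Theory.
Local Open Scope ring_scope.

Record pattern := Pattern { pa : nat; pb : nat; pc : nat; pd : nat }.

Definition pattern_pos (p : pattern) : bool :=
  [&& 0 < pa p, 0 < pb p, 0 < pc p & 0 < pd p]%N.

Definition prows (p : pattern) : nat := (pa p * pb p * pd p)%N.
Definition pcols (p : pattern) : nat := (pa p * pc p * pd p)%N.

Definition Smat (R : pzRingType) (p : pattern) : 'M[R]_(prows p, pcols p) :=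
  (1%:M : 'M[R]_(pa p)) *t (const_mx 1 : 'M[R]_(pb p, pc p)) *t (1%:M : 'M[R]_(pd p)).

Definition is_factor (R : realType) (p : pattern) (m n : nat)
    (X : 'M[R[i]]_(m, n)) : Prop :=
  exists e : (prows p = m) * (pcols p = n),
    forall i j, castmx e (Smat R[i] p) i j = 0 -> X i j = 0.

Definition chainable (p q : pattern) : bool :=
  [&& (pa q %| pa p * pc p)%N, (pd p %| pb q * pd q)%N,
      (pa p * pc p %/ pa q == pb q * pd q %/ pd p)%N,
      (pa p %| pa q)%N & (pd q %| pd p)%N].

Definition pstar (p q : pattern) : pattern :=
  Pattern (pa p) (pb p * pd p %/ pd q)%N (pa q * pc q %/ pa p)%N (pd q).

Definition architecture (ps : seq pattern) : Prop :=
  all pattern_pos ps /\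
  forall l, (l.+1 < size ps)%N ->
    pcols (nth (Pattern 1 1 1 1) ps l) = prows (nth (Pattern 1 1 1 1) ps l.+1).

Definition chainable_arch (ps : seq pattern) : Prop :=
  forall l, (l.+1 < size ps)%N ->
    chainable (nth (Pattern 1 1 1 1) ps l) (nth (Pattern 1 1 1 1) ps l.+1).

Definition iprod (ps : seq pattern) : pattern :=
  match ps with
  | [::] => Pattern 1 1 1 1
  | p :: ps' => foldl pstar p ps'
  end.

Definition beta_s (ps : seq pattern) (s : nat) : seq pattern :=
  [:: iprod (take s ps); iprod (drop s ps)].

Inductive inB (R : realType) : seq pattern -> forall m n, 'M[R[i]]_(m, n) -> Prop :=
  | inB_one (p : pattern) m n (X : 'M[R[i]]_(m, n)) :
      is_factor p X -> inB [:: p] X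
  | inB_cons (p : pattern) (ps : seq pattern) m k n
      (X : 'M[R[i]]_(m, k)) (Y : 'M[R[i]]_(k, n)) :
      is_factor p X -> inB ps Y -> ps <> [::] -> inB (p :: ps) (X *m Y).

Definition frob (R : realType) m n (A : 'M[R[i]]_(m, n)) : R :=
  Num.sqrt (\sum_(i < m) \sum_(j < n)
              ((complex.Re (A i j)) ^+ 2 + (complex.Im (A i j)) ^+ 2)).

Definition Err (R : realType) (al : seq pattern) m n (A : 'M[R[i]]_(m, n)) : R :=
  inf [set frob (A - B) | B in [set B : 'M[R[i]]_(m, n) | inB al B]].

Definition arows (ps : seq pattern) : nat := prows (head (Pattern 1 1 1 1) ps).
Definition acols (ps : seq pattern) : nat := pcols (last (Pattern 1 1 1 1) ps).

From HB Require Import structures.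
From mathcomp Require Import all_boot all_order all_algebra.
From mathcomp Require Import all_classical all_reals.
From mathcomp Require Import complex mxtens.
From mathcomp Require Import zify.
Import Order.TTheory GRing.Theory Num.Theory.
Set Implicit Arguments. Unset Strict Implicit.
Local Open Scope ring_scope.

(* A pi-factor is an abd x acd matrix whose nonzero entries lie in the a diagonal
   blocks and have row and column indices congruent mod d.  For chainable pi, pi'
   this shape survives products, with a blocks (since a | a') and congruences mod
   d' (since d' | d); the matrix dimensions are those of pi * pi'.  Hence every
   product of factors of a chainable architecture is a factor of the iterated
   product, and cutting X_1 ... X_L after position s exhibits it in B^(beta_s).
   The error inequality follows: an infimum over a larger set is smaller. *)

Lemma SmatE (R : pzRingType) (p : pattern) (r : 'I_(prows p)) (c : 'I_(pcols p)) :
  Smat R p r c =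
    ((r %/ (pb p * pd p) == c %/ (pc p * pd p)) && (r %% pd p == c %% pd p))%N%:R.
Proof.
rewrite /Smat /tensmx !mxE -!val_eqE /= mulr1 -!divnMA ![(pd p * _)%N]mulnC.
by case: (_ == _); case: (_ == _); rewrite ?mulr1 ?mulr0.
Qed.

(* The support of I_a (x) 1 (x) I_d, read inside an m x n matrix. *)
Definition block_supp (R : pzSemiRingType) m n (a d : nat) (X : 'M[R]_(m, n)) :=
  forall r c, X r c != 0 -> ((r %/ (m %/ a) == c %/ (n %/ a)) && (r %% d == c %% d))%N.

Lemma divn_dvd_mul k a b : (a %| b)%N -> (b %| k)%N -> (k %/ a = k %/ b * (b %/ a))%N.
Proof. by move=> ab bk; rewrite muln_divA // divnK. Qed.

Lemma block_supp_mul (R : pzSemiRingType) m k n a d a' d'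
    (X : 'M[R]_(m, k)) (Y : 'M[R]_(k, n)) :
  (a %| a')%N -> (d' %| d)%N -> (a' %| k)%N -> (a' %| n)%N ->
  block_supp a d X -> block_supp a' d' Y -> block_supp a d' (X *m Y).
Proof.
move=> aa' d'd a'k a'n suppX suppY r c; rewrite mxE => XY_rc_neq0.
have [l /andP[/suppX/andP[/eqP Xblk /eqP Xmod] /suppY/andP[/eqP Yblk /eqP Ymod]]] :
    exists l, (X r l != 0) && (Y l c != 0).
  apply/existsP; apply: contraNT XY_rc_neq0 => /existsPn XY0.
  apply/eqP/big1 => l _; have := XY0 l; rewrite negb_and !negbK.
  by case/orP=> /eqP->; rewrite ?mul0r ?mulr0.
apply/andP; split; apply/eqP.
  by rewrite Xblk (divn_dvd_mul aa' a'k) (divn_dvd_mul aa' a'n) !divnMA Yblk.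
by rewrite -(modn_dvdm r d'd) Xmod modn_dvdm.
Qed.

Lemma is_factorP (R : realType) (p : pattern) m n (X : 'M[R[i]]_(m, n)) :
  (0 < pa p)%N ->
  is_factor p X <-> [/\ prows p = m, pcols p = n & block_supp (pa p) (pd p) X].
Proof.
move=> pa_gt0.
have rowsE : (prows p %/ pa p = pb p * pd p)%N by rewrite /prows -mulnA mulKn.
have colsE : (pcols p %/ pa p = pc p * pd p)%N by rewrite /pcols -mulnA mulKn.
split=> [[[em en] XS] | [em en suppX]].
  case: m / em X XS; case: n / en => X; rewrite castmx_id => XS.
  split=> // r c; rewrite rowsE colsE; apply: contraR => /negbTE out.
  by apply/eqP/XS; rewrite SmatE out.
exists (em, en); case: m / em X suppX; case: n / en => X suppX r c.
rewrite castmx_id SmatE -rowsE -colsE => S_rc0; apply/eqP/negP => /negP/suppX in_supp.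
by move: S_rc0; rewrite in_supp => /eqP; rewrite oner_eq0.
Qed.

Notation unit_pattern := (Pattern 1 1 1 1).

Lemma chainable_archP (ps : seq pattern) : chainable_arch ps <-> sorted chainable ps.
Proof. exact: rwP (sortedP unit_pattern). Qed.

Lemma path_chainable_dvd p ps : path chainable p ps ->
  (pa p %| pa (last p ps))%N && (pd (last p ps) %| pd p)%N.
Proof.
elim: ps p => [|q r IH] p /=; first by rewrite !dvdnn.
case/andP=> /and5P[_ _ _ apq dqp] /IH/andP[aq dq].
by rewrite (dvdn_trans apq aq) (dvdn_trans dq dqp).
Qed.

Lemma prows_pstar p q : (pd q %| pb p * pd p)%N -> prows (pstar p q) = prows p.
Proof. by move=> dq; rewrite /prows /= -mulnA divnK // mulnA. Qed.

Lemma pcols_pstar p q : (pa p %| pa q * pc q)%N -> pcols (pstar p q) = pcols q.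
Proof. by move=> ap; rewrite /pcols /= [(pa p * _)%N]mulnC divnK. Qed.

Lemma chainable_pstar p q s : chainable p q -> chainable q s -> chainable (pstar p q) s.
Proof.
move=> /and5P[_ _ _ apq _] /and5P[aq_s ds_q chain_eq aq_as ds_dq].
rewrite /chainable /= [(pa p * _)%N]mulnC divnK ?(dvdn_mulr _ apq) //.
by rewrite aq_s ds_q chain_eq ds_dq (dvdn_trans apq aq_as).
Qed.

Lemma iprod_dims ps : sorted chainable ps ->
  [/\ pa (iprod ps) = pa (head unit_pattern ps), pd (iprod ps) = pd (last unit_pattern ps),
      prows (iprod ps) = arows ps & pcols (iprod ps) = acols ps].
Proof.
rewrite /arows /acols; case: ps => [|p ps] //=.
elim: ps p => [|q r IH] p //= /andP[chpq path_qr].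
have path_pqr : path chainable (pstar p q) r.
  by case: r {IH} path_qr => //= s r /andP[/(chainable_pstar chpq) -> ->].
have [-> -> -> ->] := IH _ path_pqr.
have /and5P[_ _ _ apq dqp] := chpq.
rewrite prows_pstar ?dvdn_mull //; case: r {IH path_qr path_pqr} => [|s r] //=.
by rewrite pcols_pstar ?dvdn_mulr.
Qed.

Section ProductsOfFactors.
Variable R : realType.

Lemma inB_block_supp ps m n (M : 'M[R[i]]_(m, n)) :
  inB ps M -> all pattern_pos ps -> sorted chainable ps ->
  [/\ arows ps = m, acols ps = n &
      block_supp (pa (head unit_pattern ps)) (pd (last unit_pattern ps)) M].
Proof.
elim=> {ps m n M} [p m n X Xp | p ps m k n X Y Xp _ IH ps_ne] /=.
  by move=> /andP[/and4P[pa_gt0 _ _ _] _] _; apply/is_factorP.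
case: ps IH ps_ne => [//|q r] IH _ /andP[p_pos qr_pos] /andP[chpq path_qr].
have [rows_Y cols_Y suppY] := IH qr_pos path_qr.
have /and4P[pa_gt0 _ _ _] := p_pos.
have [rows_X cols_X suppX] := (is_factorP _ pa_gt0).1 Xp.
split=> //; have /and5P[_ _ _ apq dqp] := chpq.
have /andP[aq_last dlast_q] := path_chainable_dvd path_qr.
apply: block_supp_mul suppX suppY => //.
- exact: dvdn_trans dlast_q dqp.
- by rewrite -rows_Y /arows /prows -!mulnA dvdn_mulr.
- by rewrite -cols_Y /acols /pcols -!mulnA (dvdn_trans aq_last) ?dvdn_mulr.
Qed.

Lemma is_factor_iprod ps m n (M : 'M[R[i]]_(m, n)) :
  inB ps M -> all pattern_pos ps -> sorted chainable ps -> is_factor (iprod ps) M.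
Proof.
move=> MB pos chain; have [pa_eq pd_eq rows_eq cols_eq] := iprod_dims chain.
have pa_gt0 : (0 < pa (head unit_pattern ps))%N.
  by case: ps {MB chain pa_eq pd_eq rows_eq cols_eq} pos => [|p ps] // /andP[/and4P[]].
rewrite -pa_eq in pa_gt0; apply/(is_factorP _ pa_gt0).
by rewrite pa_eq pd_eq rows_eq cols_eq; apply: inB_block_supp.
Qed.

Lemma inB_take_drop ps m n (M : 'M[R[i]]_(m, n)) s :
  inB ps M -> (0 < s < size ps)%N ->
  exists k (M1 : 'M[R[i]]_(m, k)) (M2 : 'M[R[i]]_(k, n)),
    [/\ M = M1 *m M2, inB (take s ps) M1 & inB (drop s ps) M2].
Proof.
move=> MB; elim: MB s => {ps m n M} [p m n X _ | p ps m k n X Y Xp YB IH ps_ne] s /=.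
  by case: s => [|[]].
case: s => [//|[_ | s]] /=.
  by exists k, X, Y; rewrite take0 drop0; split=> //; apply: inB_one.
rewrite ltnS => s_range; have [k' [Y1 [Y2 [-> Y1B Y2B]]]] := IH s.+1 s_range.
exists k', (X *m Y1), Y2; split; rewrite ?mulmxA //.
by apply: inB_cons => //; case: ps {YB IH ps_ne Y1B Y2B} s_range.
Qed.

Lemma inB_beta_s ps s m n (M : 'M[R[i]]_(m, n)) :
  all pattern_pos ps -> sorted chainable ps -> (0 < s < size ps)%N ->
  inB ps M -> inB (beta_s ps s) M.
Proof.
move=> pos chain s_range /inB_take_drop/(_ s_range)[k [M1 [M2 [-> M1B M2B]]]].
have /andP[pos_take pos_drop] : all pattern_pos (take s ps) && all pattern_pos (drop s ps).
  by rewrite -all_cat cat_take_drop.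
apply: inB_cons => //; first exact: is_factor_iprod (take_sorted s chain).
exact/inB_one/(is_factor_iprod M2B pos_drop (drop_sorted s chain)).
Qed.

Lemma is_factor0 p m n :
  prows p = m -> pcols p = n -> is_factor p (0 : 'M[R[i]]_(m, n)).
Proof. by move=> em en; exists (em, en) => r c _; rewrite mxE. Qed.

Lemma inB0 ps : (0 < size ps)%N -> sorted (fun p q => pcols p == prows q) ps ->
  inB ps (0 : 'M[R[i]]_(arows ps, acols ps)).
Proof.
rewrite /arows /acols; case: ps => [//|p ps] _ /=; elim: ps p => [|q r IH] p /=.
  by move=> _; apply/inB_one/is_factor0.
case/andP=> /eqP cols_rows /IH YB; rewrite -(mul0mx (prows p) (0 : 'M_(prows q, _))).
exact: inB_cons (is_factor0 _ cols_rows) YB _.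
Qed.

End ProductsOfFactors.

Section ApproximationError.
Variables (R : realType) (m n : nat) (A : 'M[R[i]]_(m, n)).

Lemma Err_ge0 al : 0 <= Err al A.
Proof.
rewrite /Err; set S := (X in inf X).
(* when [S] is empty its infimum is [0] *)
have [S_inf | /inf_out -> //] := pselect (has_inf S).
by apply: lb_le_inf S_inf.1 _ => _ [B _ <-]; apply: sqrtr_ge0.
Qed.

Lemma Err_le_subset al al' :
  (exists B : 'M[R[i]]_(m, n), inB al B) ->
  (forall B : 'M[R[i]]_(m, n), inB al B -> inB al' B) ->
  Err al' A <= Err al A.
Proof.
move=> [B0 B0al] sub; apply: lb_le_inf => [|_ [B Bal <-]].
  by exists (frob (A - B0)), B0.
apply: ge_inf; last by exists B => //; apply: sub.
by exists 0 => _ [B' _ <-]; apply: sqrtr_ge0.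
Qed.

End ApproximationError.

Theorem lemma7p5 (R : realType) (beta : seq pattern) :
  architecture beta -> chainable_arch beta -> (2 <= size beta)%N ->
  (forall s : nat, (1 <= s <= size beta - 1)%N ->
     forall m n (M : 'M[R[i]]_(m, n)), inB beta M -> inB (beta_s beta s) M) /\
  (forall A : 'M[R[i]]_(arows beta, acols beta),
     \big[Num.max/0]_(1 <= s < size beta) Err (beta_s beta s) A <= Err beta A).
Proof.
move=> [pos dims] /chainable_archP chain size_ge2.
have beta_s_sub s : (1 <= s <= size beta - 1)%N ->
    forall m n (M : 'M[R[i]]_(m, n)), inB beta M -> inB (beta_s beta s) M.
  by move=> s_range m n M; apply: inB_beta_s => //; lia.
split=> // A; rewrite big_seq; apply: bigmax_le => [|s]; first exact: Err_ge0.
rewrite mem_index_iota => s_range.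
apply: Err_le_subset => [|B]; last by apply: beta_s_sub; lia.
exists 0; apply: inB0; first lia.
by apply/(sortedP unit_pattern) => l /dims /eqP.
Qed.
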